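(* Let $f:\mathbb{R}^n\to\mathbb{R}_{>0}$ be a twice continuously differentiable convex function that is $\gamma$-second order robust and $\mu$-multiplicatively smooth with respect to the $\ell_2$ norm, for some $\gamma,\mu>0$. Let $\mathbf{x},\mathbf{x}^*\in\mathbb{R}^n$ and $R>0$ with $\|\mathbf{x}-\mathbf{x}^*\|_2\le R$. Let $\mathbf{x}'=\mathbf{x}-\eta\nabla f(\mathbf{x})$ with $\eta=\min\bigl\{\frac1{2\mu f(\mathbf{x})},\frac1{\gamma\|\nabla f(\mathbf{x})\|_2}\bigr\}$. If $f(\mathbf{x})>f(\mathbf{x}^* )$, then $$f(\mathbf{x})-f(\mathbf{x}')\ge\min\Bigl\{\frac{(f(\mathbf{x})-f(\mathbf{x}^* ))^2}{4\mu f(\mathbf{x})R^2},\frac{f(\mathbf{x})-f(\mathbf{x}^* )}{2\gamma R}\Bigr\},$$ and if moreover $f(\mathbf{x}')>f(\mathbf{x}^* )$ then $\|\mathbf{x}'-\mathbf{x}^*\|_2\le\|\mathbf{x}-\mathbf{x}^*\|_2$. If $f(\mathbf{x})\le f(\mathbf{x}^* )$, then $f(\mathbf{x}')\le f(\mathbf{x})$.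
   Context: $f$ is $q$-second order robust w.r.t. a norm $\|\cdot\|$ if $\|\mathbf{x}'-\mathbf{x}\|\le1/q$ implies $\tfrac12\nabla^2f(\mathbf{x})\preceq\nabla^2f(\mathbf{x}')\preceq2\nabla^2f(\mathbf{x})$; $f>0$ is $\mu$-multiplicatively smooth w.r.t. $\|\cdot\|$ if $\tilde{\mathbf{x}}^\top\nabla^2f(\mathbf{x})\tilde{\mathbf{x}}\le\mu f(\mathbf{x})\|\tilde{\mathbf{x}}\|^2$ for all $\mathbf{x},\tilde{\mathbf{x}}$. If $\nabla f(\mathbf{x})=\mathbf{0}$ the second term in the step size is read as $+\infty$. *)

From HB Require Import structures.
From mathcomp Require Import all_boot all_order all_algebra.
From mathcomp Require Import all_classical all_reals all_analysis.
Set Implicit Arguments. Unset Strict Implicit. Unset Printing Implicit Defensive.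
Import Order.TTheory GRing.Theory Num.Theory.
Import numFieldNormedType.Exports.
Local Open Scope ring_scope.

Section Defs.
Variables (R : realType) (n : nat).
Implicit Types (f : 'rV[R]_n -> R) (x y v : 'rV[R]_n).

Definition ebasis (i : 'I_n) : 'rV[R]_n := delta_mx 0 i.

Definition l2norm v : R := Num.sqrt (\sum_(i < n) v 0 i ^+ 2).

Definition partial f (i : 'I_n) (x : 'rV[R]_n) : R := derive f x (ebasis i).

Definition grad f x : 'rV[R]_n := \row_(i < n) partial f i x.

Definition hessian f x : 'M[R]_n :=
  \matrix_(i < n, j < n) partial (partial f j) i x.

Definition quadf (H : 'M[R]_n) v : R := (v *m H *m v^T) 0 0.

Definition C2 f : Prop :=
  (forall x, differentiable f x) /\
  (forall i x, differentiable (partial f i) x) /\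
  (forall i j, continuous (partial (partial f j) i)).

Definition convex_fun f : Prop :=
  forall x y (t : R), 0 <= t <= 1 ->
    f (t *: x + (1 - t) *: y) <= t * f x + (1 - t) * f y.

Definition second_order_robust (q : R) f : Prop :=
  forall x x', l2norm (x' - x) <= 1 / q ->
    forall v, (1/2) * quadf (hessian f x) v <= quadf (hessian f x') v /\
              quadf (hessian f x') v <= 2 * quadf (hessian f x) v.

Definition mult_smooth (mu : R) f : Prop :=
  (forall x, 0 < f x) /\
  forall x v, quadf (hessian f x) v <= mu * f x * l2norm v ^+ 2.

(* step size eta = min{1/(2 mu f x), 1/(gamma ||grad f x||)}, second term = +oo
   when the gradient vanishes *)
Definition step_size (mu gamma : R) f x : R :=
  if grad f x == 0 then 1 / (2 * mu * f x)
  else Num.min (1 / (2 * mu * f x)) (1 / (gamma * l2norm (grad f x))).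

Definition gd_step (mu gamma : R) f x : 'rV[R]_n :=
  x - step_size mu gamma f x *: grad f x.

End Defs.

(* Along the segment from x to x' = x - eta grad f(x) we have
   |x' - x| = eta |grad f(x)| <= 1/gamma, so second-order robustness bounds the
   Hessian there by twice its value at x, hence by 2 mu f(x) |.|^2, and a
   second-order Taylor expansion gives the sufficient decrease
   f(x) - f(x') >= eta |grad f(x)|^2 / 2.  Convexity and Cauchy-Schwarz give
   f(x) - f(x⋆) <= <grad f(x), x - x⋆> <= R |grad f(x)|, and the two branches of
   eta turn the decrease into the stated minimum.  When f(x') > f(x⋆), the
   decrease also yields eta |grad f(x)|^2 <= 2 <grad f(x), x - x⋆>, which is
   exactly what makes |x - x⋆ - eta grad f(x)| <= |x - x⋆|. *)

From HB Require Import structures.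
From mathcomp Require Import all_boot all_order all_algebra.
From mathcomp Require Import all_classical all_reals all_analysis.
From mathcomp Require Import ring lra.
Set Implicit Arguments. Unset Strict Implicit. Unset Printing Implicit Defensive.
Import Order.TTheory GRing.Theory Num.Theory.
Import numFieldNormedType.Exports.
Local Open Scope ring_scope.

Section Euclidean.
Variables (R : realType) (n : nat).
Implicit Types (u v : 'rV[R]_n).

Definition dotv u v : R := \sum_(i < n) u 0 i * v 0 i.

Definition sqnorm v : R := \sum_(i < n) v 0 i ^+ 2.

Lemma l2normE v : l2norm v = Num.sqrt (sqnorm v).
Proof. by []. Qed.

Lemma sqnorm_ge0 v : 0 <= sqnorm v.
Proof. by apply: sumr_ge0 => i _; rewrite sqr_ge0. Qed.

Lemma l2norm_ge0 v : 0 <= l2norm v.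
Proof. exact: sqrtr_ge0. Qed.

Lemma l2norm_sq v : l2norm v ^+ 2 = sqnorm v.
Proof. by rewrite l2normE sqr_sqrtr // sqnorm_ge0. Qed.

Lemma l2norm0 : l2norm (0 : 'rV[R]_n) = 0.
Proof. by rewrite /l2norm big1 ?sqrtr0 // => i _; rewrite mxE expr0n. Qed.

Lemma sqnormZ (t : R) v : sqnorm (t *: v) = t ^+ 2 * sqnorm v.
Proof. by rewrite /sqnorm mulr_sumr; apply: eq_bigr => i _; rewrite !mxE; ring. Qed.

Lemma l2normZ (t : R) v : l2norm (t *: v) = `|t| * l2norm v.
Proof. by rewrite !l2normE sqnormZ sqrtrM ?sqr_ge0 // sqrtr_sqr. Qed.

Lemma dotvv v : dotv v v = sqnorm v.
Proof. by apply: eq_bigr => i _; rewrite expr2. Qed.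

Lemma dotvZl (t : R) u v : dotv (t *: u) v = t * dotv u v.
Proof. by rewrite /dotv mulr_sumr; apply: eq_bigr => i _; rewrite !mxE; ring. Qed.

Lemma sqnormB_scale u (t : R) v :
  sqnorm (u - t *: v) = sqnorm u - 2 * t * dotv u v + t ^+ 2 * sqnorm v.
Proof.
rewrite /sqnorm /dotv !mulr_sumr -sumrB -big_split /=.
by apply: eq_bigr => i _; rewrite !mxE; ring.
Qed.

Lemma sqnorm_eq0 v : sqnorm v = 0 -> v = 0.
Proof.
move=> v0; apply/rowP => i; rewrite mxE; apply/eqP; rewrite -sqrf_eq0.
by apply/eqP; apply: (psumr_eq0P _ v0) => // j _; rewrite sqr_ge0.
Qed.

Lemma dotv0r u : dotv u 0 = 0.
Proof. by rewrite /dotv big1 // => i _; rewrite mxE mulr0. Qed.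

Lemma dotv_sq_le u v : dotv u v ^+ 2 <= sqnorm u * sqnorm v.
Proof.
have [v_gt0|] := ltrP 0 (sqnorm v); last first.
  rewrite le_eqVlt ltNge sqnorm_ge0 orbF => /eqP /sqnorm_eq0 ->.
  by rewrite dotv0r expr0n mulr_ge0 ?sqnorm_ge0.
(* expand |(v.v) u - (u.v) v|^2 >= 0 and divide by v.v *)
have := sqnorm_ge0 (sqnorm v *: u - dotv u v *: v).
rewrite sqnormB_scale sqnormZ dotvZl => h.
have : 0 <= sqnorm v * (sqnorm u * sqnorm v - dotv u v ^+ 2) by nra.
by rewrite pmulr_rge0 // subr_ge0.
Qed.

Lemma dotv_le_l2norm u v : dotv u v <= l2norm u * l2norm v.
Proof.
have [uv_le0|uv_gt0] := lerP (dotv u v) 0.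
  by apply: le_trans uv_le0 _; rewrite mulr_ge0 ?l2norm_ge0.
rewrite !l2normE -sqrtrM ?sqnorm_ge0 // -[dotv u v]gtr0_norm // -sqrtr_sqr.
by rewrite ler_sqrt ?mulr_ge0 ?sqnorm_ge0 // dotv_sq_le.
Qed.

End Euclidean.

Section RealLine.
Variable R : realType.

Lemma taylor2_le (g g1 g2 : R -> R) (M : R) :
  (forall t, is_derive t (1 : R) g (g1 t)) ->
  (forall t, is_derive t (1 : R) g1 (g2 t)) ->
  (forall t, 0 <= t <= 1 -> g2 t <= M) ->
  g 1 <= g 0 + g1 0 + M / 2.
Proof.
move=> dg dg1 g2_le.
(* h(1) <= h(0): by the MVT twice, h'(c) = g1(c) - g1(0) - M c = (g2(d) - M) c <= 0 *)
pose h t := g t - (g1 0 * t + M / 2 * t ^+ 2).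
pose h1 t := g1 t - (g1 0 + M * t).
have dh t : is_derive t (1 : R) h (h1 t).
  have d1 : is_derive t (1 : R) (fun s : R => g1 0 * s) (g1 0).
    apply: (is_derive_eq (is_deriveZ (g1 0) (is_derive_id t (1 : R)))).
    by rewrite /GRing.scale /=; ring.
  have d2 : is_derive t (1 : R) (fun s : R => M / 2 * s ^+ 2) (M * t).
    apply: (is_derive_eq (is_deriveZ (M / 2) (is_deriveX 2 (is_derive_id t (1 : R))))).
    by rewrite /= expr1 /GRing.scale /=; field.
  exact: is_deriveB (dg t) (is_deriveD d1 d2).
have [c /[!in_itv]/andP[c_gt0 c_lt1] hc] := MVT ltr01 (fun t _ => dh t)
  (derivable_within_continuous (fun t _ => ex_derive (is_derive := dh t))).
have [d /[!in_itv]/andP[d_gt0 d_ltc] hd] := MVT c_gt0 (fun t _ => dg1 t)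
  (derivable_within_continuous (fun t _ => ex_derive (is_derive := dg1 t))).
have g2d_le : g2 d <= M by apply: g2_le; rewrite !ltW // (lt_trans d_ltc).
have : h 1 - h 0 <= 0.
  rewrite hc /h1 subr0 mulr1.
  have -> : g1 c = g1 0 + g2 d * c by rewrite -[c in g2 d * c]subr0 -hd; ring.
  have -> : g1 0 + g2 d * c - (g1 0 + M * c) = (g2 d - M) * c by ring.
  by rewrite pmulr_lle0 // subr_le0.
by rewrite /h expr1n expr0n /= !mulr0 !mulr1 !addr0 subr0; lra.
Qed.

Lemma is_derive0_le_slope (g : R -> R) (D S : R) :
  is_derive (0 : R) (1 : R) g D -> (forall s, 0 < s <= 1 -> g s - g 0 <= s * S) -> D <= S.
Proof.
(* the difference quotients tend to D but are bounded by S *)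
move=> [dg vg] chord_le.
rewrite leNgt; apply/negP => S_lt_D.
have cv : (h^-1 *: ((g \o shift 0) (h *: 1) - g 0) @[h --> 0^'] --> D)%classic.
  by rewrite -vg; exact: dg.
have e0 : 0 < D - S by rewrite subr_gt0.
move/cvgrPdist_lt: cv => /(_ _ e0).
rewrite near_withinE => /nbhs_ballP [e /= e_gt0 He].
pose s := Num.min (e / 2) 1.
have s_gt0 : 0 < s by rewrite lt_min ltr01 andbT divr_gt0.
have s_le1 : s <= 1 by rewrite ge_min lexx orbT.
have s_lte : s < e by rewrite gt_min; apply/orP; left; lra.
have := He s; rewrite /ball /= sub0r normrN gtr0_norm // => /(_ s_lte (lt0r_neq0 s_gt0)).
rewrite /shift /= addr0 [s%:A]/GRing.scale /= mulr1.
have : s^-1 * (g s - g 0) <= S by rewrite ler_pdivrMl // chord_le ?s_gt0.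
have := ler_norm (D - s^-1 *: (g s - g 0)).
by rewrite /GRing.scale /=; lra.
Qed.

End RealLine.

Section Gradient.
Variables (R : realType) (n : nat).
Implicit Types (f : 'rV[R]_n -> R) (x y v : 'rV[R]_n).

Lemma derive_gradE f x v : differentiable f x -> 'D_v f x = dotv v (grad f x).
Proof.
move=> df; rewrite deriveE // {1}[v]matrix_sum_delta big_ord1 linear_sum.
apply: eq_bigr => i _.
by rewrite linearZ mxE /partial deriveE.
Qed.

Lemma is_derive_line f x v t :
  derivable f (x + t *: v) v ->
  is_derive t (1 : R) (fun s : R => f (x + s *: v)) ('D_v f (x + t *: v)).
Proof.
move=> dF.
have E : (fun h : R => h^-1 *: (((fun s => f (x + s *: v)) \o shift t) (h *: 1)
                                   - f (x + t *: v)))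
        = (fun h : R => h^-1 *: ((f \o shift (x + t *: v)) (h *: v) - f (x + t *: v))).
  apply/funext => h /=; congr (_ *: (f _ - _)).
  by rewrite /shift /= [X in (X + t) *: v]/GRing.scale /= mulr1 scalerDl addrCA.
by split; [rewrite /derivable E | rewrite /derive E].
Qed.

Lemma is_derive_line_grad f x v t :
  (forall y, differentiable f y) ->
  is_derive t (1 : R) (fun s : R => f (x + s *: v)) (dotv v (grad f (x + t *: v))).
Proof.
move=> df; rewrite -derive_gradE //.
exact/is_derive_line/diff_derivable.
Qed.

Lemma is_derive_line_hessian f x v t :
  C2 f ->
  is_derive t (1 : R) (fun s : R => dotv v (grad f (x + s *: v)))
    (quadf (hessian f (x + t *: v)) v).
Proof.
move=> [_ [dpartial _]].
have -> : (fun s : R => dotv v (grad f (x + s *: v)))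
        = \sum_(i < n) (fun s : R => v 0 i * partial f i (x + s *: v)).
  by apply/funext => s; rewrite fct_sumE /dotv; apply: eq_bigr => i _; rewrite mxE.
apply: is_derive_eq.
  apply: is_derive_sum => i.
  exact/is_deriveZ/is_derive_line/diff_derivable.
rewrite /quadf !mxE; apply: eq_bigr => i _.
rewrite derive_gradE // /dotv !mxE mulr_suml /GRing.scale /= mulr_sumr.
by apply: eq_bigr => j _; rewrite !mxE; ring.
Qed.

Lemma C2_taylor_le f x v (M : R) :
  C2 f -> (forall t, 0 <= t <= 1 -> quadf (hessian f (x + t *: v)) v <= M) ->
  f (x + v) <= f x + dotv v (grad f x) + M / 2.
Proof.
move=> C2f hess_le; have [df _] := C2f.
have := taylor2_le (fun t => is_derive_line_grad x v t df)
  (fun t => is_derive_line_hessian x v t C2f) hess_le.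
by rewrite scale1r scale0r addr0.
Qed.

Lemma convex_fun_grad_le f x y :
  convex_fun f -> (forall z, differentiable f z) ->
  f x - f y <= dotv (x - y) (grad f x).
Proof.
move=> cvx df.
have := is_derive_line_grad x (y - x) 0 df; rewrite scale0r addr0 => dg.
have chord_le s : 0 < s <= 1 ->
    f (x + s *: (y - x)) - f (x + 0 *: (y - x)) <= s * (f y - f x).
  case/andP=> s_gt0 s_le1; have := cvx y x s; rewrite ltW // s_le1 => /(_ isT).
  by rewrite scale0r addr0 scalerBr scalerBl scale1r addrCA; lra.
have := is_derive0_le_slope dg chord_le.
rewrite -opprB -scaleN1r dotvZl; lra.
Qed.

End Gradient.

Section GradientStep.
Variables (R : realType) (n : nat) (f : 'rV[R]_n -> R) (gamma mu : R).
Hypotheses (gamma_gt0 : 0 < gamma) (mu_gt0 : 0 < mu) (f_gt0 : forall x, 0 < f x).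
Implicit Types (x : 'rV[R]_n).

Local Notation eta x := (step_size mu gamma f x).

Lemma step_size_ge0 x : 0 <= eta x.
Proof.
rewrite /step_size; have fx_gt0 := f_gt0 x.
case: eqP => _; first by rewrite divr_ge0 // ltW // !mulr_gt0.
by rewrite le_min !divr_ge0 ?mulr_ge0 ?l2norm_ge0 // ltW // !mulr_gt0.
Qed.

Lemma step_size_smooth_le x : mu * f x * eta x <= 1 / 2.
Proof.
have fx_gt0 := f_gt0 x.
have eta_le : eta x <= 1 / (2 * mu * f x).
  by rewrite /step_size; case: eqP => _ //; rewrite ge_min lexx.
apply: le_trans (ler_wpM2l _ eta_le) _; first by rewrite mulr_ge0 // ltW.
by rewrite le_eqVlt; apply/orP; left; apply/eqP; field; rewrite !lt0r_neq0.
Qed.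

Lemma step_size_grad_le x : eta x * l2norm (grad f x) <= 1 / gamma.
Proof.
have inv_gamma_ge0 : 0 <= 1 / gamma by rewrite divr_ge0 // ltW.
rewrite /step_size; case: eqP => [->|_]; first by rewrite l2norm0 mulr0.
have [->|g_gt0] := eqVneq (l2norm (grad f x)) 0; first by rewrite mulr0.
apply: (@le_trans _ _ (1 / (gamma * l2norm (grad f x)) * l2norm (grad f x))).
  by rewrite ler_wpM2r ?l2norm_ge0 // ge_min lexx orbT.
by rewrite le_eqVlt; apply/orP; left; apply/eqP; field; rewrite lt0r_neq0.
Qed.

Lemma gd_step_decrease x :
  C2 f -> second_order_robust gamma f ->
  (forall x v, quadf (hessian f x) v <= mu * f x * l2norm v ^+ 2) ->
  eta x * sqnorm (grad f x) / 2 <= f x - f (gd_step mu gamma f x).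
Proof.
move=> C2f robust smooth.
pose v := - (eta x *: grad f x).
have v_sq : l2norm v ^+ 2 = eta x ^+ 2 * sqnorm (grad f x).
  by rewrite l2norm_sq /v -scaleNr sqnormZ sqrrN.
have hess_le t : 0 <= t <= 1 ->
    quadf (hessian f (x + t *: v)) v <= 2 * (mu * f x * l2norm v ^+ 2).
  case/andP=> t_ge0 t_le1.
  have near_x : l2norm ((x + t *: v) - x) <= 1 / gamma.
    rewrite addrC addKr l2normZ /v -scaleNr l2normZ normrN.
    rewrite !ger0_norm ?step_size_ge0 //; apply: le_trans (step_size_grad_le x).
    by rewrite ler_piMl ?mulr_ge0 ?step_size_ge0 ?l2norm_ge0.
  have [_ hess_le2] := robust x _ near_x v.
  by apply: le_trans hess_le2 _; rewrite ler_wpM2l.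
have := C2_taylor_le C2f hess_le.
have -> : dotv v (grad f x) = - (eta x * sqnorm (grad f x)).
  by rewrite /v -scaleNr dotvZl dotvv mulNr.
rewrite v_sq -/(gd_step _ _ _ _) => taylor.
have := step_size_smooth_le x.
have : 0 <= eta x * sqnorm (grad f x) by rewrite mulr_ge0 ?step_size_ge0 ?sqnorm_ge0.
nra.
Qed.

Lemma step_decrease_ge_min x (D Rad : R) :
  0 < Rad -> 0 < D -> D <= l2norm (grad f x) * Rad ->
  Num.min (D ^+ 2 / (4 * mu * f x * Rad ^+ 2)) (D / (2 * gamma * Rad))
    <= eta x * sqnorm (grad f x) / 2.
Proof.
move=> Rad_gt0 D_gt0 D_le; have fx_gt0 := f_gt0 x.
set g := l2norm (grad f x) in D_le *.
have g_gt0 : 0 < g by rewrite -(pmulr_lgt0 _ Rad_gt0); lra.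
rewrite /step_size; have /negPf -> : grad f x != 0.
  by apply: contraTneq g_gt0 => g0; rewrite /g g0 l2norm0 ltxx.
rewrite -l2norm_sq -/g -[_ * g ^+ 2 / 2]mulrA minr_pMl ?divr_ge0 ?sqr_ge0 // le_min.
have Dsq_le : D ^+ 2 <= (g * Rad) ^+ 2 by nra.
apply/andP; split; rewrite ge_min; apply/orP; [left | right].
- apply: le_trans (ler_wpM2r _ Dsq_le) _.
    by rewrite invr_ge0 ltW // !mulr_gt0 // exprn_gt0.
  by rewrite le_eqVlt; apply/orP; left; apply/eqP; field; rewrite !lt0r_neq0.
- apply: le_trans (ler_wpM2r _ D_le) _; first by rewrite invr_ge0 ltW // !mulr_gt0.
  by rewrite le_eqVlt; apply/orP; left; apply/eqP; field; rewrite !lt0r_neq0.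
Qed.

End GradientStep.

Theorem lemma8 (R : realType) (n : nat) (f : 'rV[R]_n -> R) (gamma mu : R)
  (x xstar : 'rV[R]_n) (Rad : R) :
  C2 f -> convex_fun f -> 0 < gamma -> 0 < mu ->
  second_order_robust gamma f -> mult_smooth mu f ->
  0 < Rad -> l2norm (x - xstar) <= Rad ->
  let x' := gd_step mu gamma f x in
  (f xstar < f x ->
     Num.min ((f x - f xstar) ^+ 2 / (4 * mu * f x * Rad ^+ 2))
             ((f x - f xstar) / (2 * gamma * Rad)) <= f x - f x') /\
  (f xstar < f x -> f xstar < f x' -> l2norm (x' - xstar) <= l2norm (x - xstar)) /\
  (f x <= f xstar -> f x' <= f x).
Proof.
move=> C2f cvx gamma_gt0 mu_gt0 robust [f_gt0 smooth] Rad_gt0 dist_le x'.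
set eta := step_size mu gamma f x; set g := grad f x.
have decrease : eta * sqnorm g / 2 <= f x - f x' by exact: gd_step_decrease.
have eta_ge0 : 0 <= eta by exact: step_size_ge0.
have descent_ge0 : 0 <= eta * sqnorm g by rewrite mulr_ge0 ?sqnorm_ge0.
have gap_le : f x - f xstar <= dotv (x - xstar) g.
  by apply: convex_fun_grad_le => //; case: C2f.
split; [|split] => [gap_gt0 | gap_gt0 gap'_gt0 | _]; last by lra.
- apply: le_trans decrease; apply: step_decrease_ge_min; rewrite ?subr_gt0 //.
  apply: (le_trans gap_le); apply: le_trans (dotv_le_l2norm _ _) _.
  by rewrite mulrC ler_wpM2l ?l2norm_ge0.
- have -> : x' - xstar = (x - xstar) - eta *: g by rewrite /x' /gd_step addrAC.
  rewrite !l2normE ler_sqrt ?sqnorm_ge0 // sqnormB_scale.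
  (* the decrease, f(x') > f(x⋆) and convexity give eta |g|^2 <= 2 <x - x⋆, g> *)
  have : eta * sqnorm g <= 2 * dotv (x - xstar) g by lra.
  nra.
Qed.
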